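(* If $G$ is a connected graph and $f=(V_0,V_1,V_2)$ is an OIRD function of $G$ of minimum weight $\gamma_{oiR}(G)$ (where $V_i=\{v: f(v)=i\}$), then $\gamma_{oidR}(G)\le 2\gamma_{oiR}(G)-|V_2|$.
   Context: A DRD function of $G$ is $f:V(G)\to\{0,1,2,3\}$ such that every vertex with value $0$ has a neighbor with value $3$ or two neighbors with value $2$, and every vertex with value $1$ has a neighbor with value at least $2$; it is an OIDRD function if the set of vertices with value $0$ is independent, and $\gamma_{oidR}(G)$ is the minimum weight $\sum_v f(v)$ of an OIDRD function. A Roman dominating function is $f:V(G)\to\{0,1,2\}$ such that every vertex with value $0$ has a neighbor with value $2$; it is an OIRD function if the set of vertices with value $0$ is independent, and $\gamma_{oiR}(G)$ is the minimum weight of an OIRD function. *)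

From mathcomp Require Import all_boot.
Set Implicit Arguments. Unset Strict Implicit. Unset Printing Implicit Defensive.

(* A finite simple graph: vertex set T (finType), adjacency e : rel T,
   symmetric and irreflexive. Labelings are functions f : T -> nat. *)

Section Defs.
Variables (T : finType) (e : rel T).

Definition connected_graph : Prop := forall x y : T, connect e x y.

Definition weight (f : T -> nat) : nat := \sum_(v : T) f v.

Definition Vset (f : T -> nat) (i : nat) : {set T} := [set v | f v == i].

Definition zeros_independent (f : T -> nat) : bool :=
  [forall u, forall v, ~~ [&& e u v, f u == 0 & f v == 0]].

Definition is_DRD (f : T -> nat) : bool :=
  [forall v, f v <= 3] &&
  [forall v, (f v == 0) ==>
     ([exists u, e v u && (f u == 3)] || (2 <= #|[set u | e v u & f u == 2]|))] &&
  [forall v, (f v == 1) ==> [exists u, e v u && (2 <= f u)]].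

Definition is_OIDRD (f : T -> nat) : bool := is_DRD f && zeros_independent f.

Definition is_RD (f : T -> nat) : bool :=
  [forall v, f v <= 2] &&
  [forall v, (f v == 0) ==> [exists u, e v u && (f u == 2)]].

Definition is_OIRD (f : T -> nat) : bool := is_RD f && zeros_independent f.

(* minimum weights; every OIDRD (resp. OIRD) function takes values in
   {0..3} (resp. {0..2}), so it suffices to range over finite functions
   into 'I_4 (resp. 'I_3). The constant-3 (resp. constant-2) function is
   admissible, so the initial value of the min is an attained weight. *)
Definition gamma_oidR : nat :=
  \big[minn/3 * #|T|]_(g : {ffun T -> 'I_4} | is_OIDRD (fun v => nat_of_ord (g v)))
     weight (fun v => nat_of_ord (g v)).

Definition gamma_oiR : nat :=
  \big[minn/2 * #|T|]_(g : {ffun T -> 'I_3} | is_OIRD (fun v => nat_of_ord (g v)))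
     weight (fun v => nat_of_ord (g v)).

End Defs.

From mathcomp Require Import all_boot all_order.
From mathcomp Require Import zify.
Import Order.TTheory.

Set Implicit Arguments.
Unset Strict Implicit.
Unset Printing Implicit Defensive.

(* Raising every positive label of an OIRD function f by one keeps its zeros,
   hence their independence, and relabels 1, 2 as 2, 3: every vertex labelled
   0 then sees a neighbour labelled 3 and no vertex is labelled 1, so the result
   is an OIDRD function.  Labels 0 and 1 are doubled while 2 becomes 3, so its
   weight is 2 w(f) - |V_2|. *)

Section Relabelling.
Variables (T : finType) (e : rel T).

Lemma eq_is_OIDRD (f1 f2 : T -> nat) : f1 =1 f2 -> is_OIDRD e f1 = is_OIDRD e f2.
Proof.
move=> f12; rewrite /is_OIDRD /is_DRD /zeros_independent.
have card12 v : #|[set u | e v u & f1 u == 2]| = #|[set u | e v u & f2 u == 2]|.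
  by apply: eq_card => u; rewrite !inE f12.
congr (_ && _ && _ && _); apply: eq_forallb => v.
- by rewrite f12.
- rewrite f12 card12; congr (_ ==> (_ || _)).
  by apply: eq_existsb => u; rewrite f12.
- rewrite f12; congr (_ ==> _).
  by apply: eq_existsb => u; rewrite f12.
- by apply: eq_forallb => u; rewrite !f12.
Qed.

Lemma gamma_oidR_le_weight (f : T -> nat) :
  is_OIDRD e f -> gamma_oidR e <= weight f.
Proof.
move=> f_oidrd; have /andP[/andP[/andP[/forallP f_le3 _] _] _] := f_oidrd.
pose g : {ffun T -> 'I_4} := [ffun v => inord (f v)].
have gE v : nat_of_ord (g v) = f v by rewrite ffunE inordK // ltnS f_le3.
have -> : weight f = weight (fun v => nat_of_ord (g v)).
  by apply: eq_bigr => v _; rewrite gE.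
rewrite /gamma_oidR -minEnat -leEnat; apply: bigmin_le_cond.
by rewrite /= (eq_is_OIDRD gE).
Qed.

Definition raise_positive (f : T -> nat) (v : T) : nat := f v + (f v != 0).

Lemma raise_positive_eq0 (f : T -> nat) v : (raise_positive f v == 0) = (f v == 0).
Proof. by rewrite /raise_positive; case: (f v). Qed.

Lemma raise_positive_OIDRD (f : T -> nat) : is_OIRD e f -> is_OIDRD e (raise_positive f).
Proof.
case/andP=> /andP[/forallP f_le2 /forallP f_dom] /forallP f_ind.
rewrite /is_OIDRD /is_DRD /zeros_independent -!andbA; apply/and4P; split.
- by apply/forallP => v; move: (f_le2 v); rewrite /raise_positive; case: (f v) => [|[|[|]]].
- apply/forallP => v; rewrite raise_positive_eq0; apply/implyP => /(implyP (f_dom v)).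
  case/existsP=> u /andP[evu /eqP fu2]; apply/orP; left.
  by apply/existsP; exists u; rewrite evu /raise_positive fu2.
- by apply/forallP => v; rewrite /raise_positive; case: (f v) => [|n]; rewrite ?addn1.
- apply/forallP => u; apply/forallP => v; rewrite !raise_positive_eq0.
  exact: (forallP (f_ind u) v).
Qed.

Lemma weight_raise_positive (f : T -> nat) : (forall v, f v <= 2) ->
  weight (raise_positive f) + #|Vset f 2| = 2 * weight f.
Proof.
move=> f_le2; rewrite /weight /Vset -sum1_card [X in _ + X]big_mkcond /=.
rewrite big_distrr -big_split /=; apply: eq_bigr => v _.
by rewrite inE /raise_positive; have := f_le2 v; case: (f v) => [|[|[]]].
Qed.

End Relabelling.

Theorem corollary1 (T : finType) (e : rel T)
  (e_sym : symmetric e) (e_irr : irreflexive e)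
  (G_conn : connected_graph e)
  (f : T -> nat) (f_oird : is_OIRD e f)
  (f_min : weight f = gamma_oiR e) :
  gamma_oidR e <= 2 * gamma_oiR e - #|Vset f 2|.
Proof.
have f_le2 v : f v <= 2 by have /andP[/andP[/forallP f_le2 _] _] := f_oird.
have := gamma_oidR_le_weight (raise_positive_OIDRD f_oird).
have := weight_raise_positive f_le2.
rewrite -f_min; lia.
Qed.
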